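(* Let $F_0,\dots,F_m\in\mathbb C[t_0,t_1,t_2]$ be homogeneous polynomials defining projective plane curves $\mathcal C_0,\dots,\mathcal C_m\subset\mathbb P^2$, and suppose: (i) $F_1,\dots,F_m$ have positive degree in $t_0$; (ii) $F_1,\dots,F_m$ have the same total degree; (iii) $\gcd(F_1,\dots,F_m)=1$. Let $\bar c=(c_1,\dots,c_m)$ be new variables, $F(\bar c,\bar t_h)=c_1F_1+\dots+c_mF_m$, and $R(\bar c,t_1,t_2)=\operatorname{Res}_{t_0}(F_0,F)$. Let $\operatorname{lc}_{t_0}(F_0)\in\mathbb C[t_1,t_2]$ and $\operatorname{lc}_{t_0}(F)\in\mathbb C[\bar c,t_1,t_2]$ be the leading coefficients with respect to $t_0$. If $\bar t^o=(t_1^o,t_2^o)\in\mathbb C^2\setminus\{\bar0\}$ satisfies $\operatorname{Con}_{\bar c}(R)(\bar t^o)=0$ and $\operatorname{lc}_{t_0}(F_0)(\bar t^o)\cdot\operatorname{lc}_{t_0}(F)(\bar c,\bar t^o)\neq0$ (the latter as a polynomial in $\bar c$), then there exists $t_0^o\in\mathbb C$ such that $(t_0^o:t_1^o:t_2^o)\in\bigcap_{i=0}^m\mathcal C_i$.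
   Context: $\operatorname{Res}_{t_0}$ is the univariate resultant with respect to $t_0$; $\operatorname{Con}_{\bar c}(R)\in\mathbb C[t_1,t_2]$ is the content of $R$ viewed as a polynomial in $\bar c$ with coefficients in $\mathbb C[t_1,t_2]$ (gcd of its coefficients). $\bar t_h=(t_0,t_1,t_2)$. *)

From HB Require Import structures.
From mathcomp Require Import all_boot all_order all_algebra.
Set Implicit Arguments. Unset Strict Implicit. Unset Printing Implicit Defensive.
Import Order.TTheory GRing.Theory Num.Theory.
Local Open Scope ring_scope.

(* Polynomials in n variables c_1..c_n over an integral domain A, as nested
   univariate polynomials: mpoly A 0 = A, mpoly A n.+1 = {poly (mpoly A n)}
   (the outermost variable is c_{n}). *)
Fixpoint mpoly (A : idomainType) (n : nat) : idomainType :=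
  match n with
  | 0 => A
  | n'.+1 => ({poly (mpoly A n')} : idomainType)
  end.

Fixpoint mconst (A : idomainType) (n : nat) : A -> mpoly A n :=
  match n return A -> mpoly A n with
  | 0 => fun a => a
  | n'.+1 => fun a => (mconst n' a)%:P
  end.

(* the variable c_(i+1), for i : 'I_n *)
Fixpoint mvar (A : idomainType) (n : nat) : 'I_n -> mpoly A n :=
  match n return 'I_n -> mpoly A n with
  | 0 => fun i => 0
  | n'.+1 => fun i => match unlift ord_max i with
                      | Some j => (@mvar A n' j)%:P
                      | None => 'X
                      end
  end.

Fixpoint mmap (A A' : idomainType) (f : A -> A') (n : nat) : mpoly A n -> mpoly A' n :=
  match n return mpoly A n -> mpoly A' n with
  | 0 => f
  | n'.+1 => fun p => map_poly (@mmap A A' f n') p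
  end.

Fixpoint mcoefs (A : idomainType) (n : nat) : mpoly A n -> seq A :=
  match n return mpoly A n -> seq A with
  | 0 => fun a => [:: a]
  | n'.+1 => fun p => flatten (map (@mcoefs A n') (polyseq p))
  end.

(* K[t1,t2], represented as {poly {poly K}}: outer variable t1, inner t2. *)
Notation Kt12 K := {poly {poly K}}.

Definition eval12 (K : fieldType) (q : Kt12 K) (b c : K) : K :=
  (map_poly (fun r : {poly K} => r.[c]) q).[b].

(* K[t0,t1,t2] represented as {poly (K[t1,t2])}: outer variable t0. *)
Definition eval012 (K : fieldType) (p : {poly Kt12 K}) (a b c : K) : K :=
  (map_poly (fun q => eval12 q b c) p).[a].

Definition coef3 (K : fieldType) (p : {poly Kt12 K}) (i j k : nat) : K :=
  ((p`_i)`_j)`_k.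

Definition homogeneous (K : fieldType) (d : nat) (p : {poly Kt12 K}) : Prop :=
  forall i j k, coef3 p i j k != 0 -> (i + j + k)%N = d.

Definition divides (A : comRingType) (d x : A) : Prop := exists r, x = r * d.

Definition is_gcd (A : comRingType) (g : A) (s : seq A) : Prop :=
  (forall x, x \in s -> divides g x) /\
  (forall d, (forall x, x \in s -> divides d x) -> divides d g).

Definition on_curve (K : fieldType) (p : {poly Kt12 K}) (a b c : K) : Prop :=
  eval012 p a b c = 0.

(* Specialising t = (t1o, t2o) is a ring morphism ev; since it does not kill the
   leading coefficients of F0 and F = sum c_i F_i, ev commutes with the
   resultant, so ev(R) = Res(ev F0, ev F). As the content of R vanishes at
   t, ev(R) = 0. Over K the polynomial ev F0 splits into linear factors, and a
   vanishing resultant forces one of its roots z to be a root of ev F as well,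
   i.e. sum c_i (ev F_i)(z) = 0 in K[c]; hence (ev F_i)(z) = 0 for every i. *)

From HB Require Import structures.
From mathcomp Require Import all_boot all_order all_algebra.
Import Order.TTheory GRing.Theory Num.Theory.
Local Open Scope ring_scope.

(* mxpoly's map_resultant only covers morphisms out of a polynomial ring. *)
Lemma rmorph_resultant (aR rR : nzRingType) (f : {rmorphism aR -> rR}) (p q : {poly aR}) :
    f (lead_coef p) != 0 -> f (lead_coef q) != 0 ->
  f (resultant p q) = resultant (map_poly f p) (map_poly f q).
Proof.
move=> nz_fp nz_fq; rewrite /resultant /Sylvester_mx !size_map_poly_id0 //.
rewrite -det_map_mx /= map_col_mx; congr (\det (col_mx _ _));
  by apply: map_lin1_mx => v; rewrite map_poly_rV rmorphM /= map_rVpoly.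
Qed.

Lemma coprimep_prod_XsubC (L : fieldType) (rs : seq L) (q : {poly L}) :
  (forall z, z \in rs -> ~~ root q z) -> coprimep (\prod_(z <- rs) ('X - z%:P)) q.
Proof.
elim: rs => [|z rs IHrs] nroot_q; first by rewrite big_nil coprime1p.
rewrite big_cons coprimepMl coprimep_sym coprimep_XsubC nroot_q ?mem_head //=.
by apply: IHrs => y rs_y; apply: nroot_q; rewrite in_cons rs_y orbT.
Qed.

Lemma resultant_split_eq0 (A : idomainType) (c : A) (rs : seq A) (q : {poly A}) :
    c != 0 -> q != 0 -> resultant (c *: \prod_(r <- rs) ('X - r%:P)) q = 0 ->
  exists2 r, r \in rs & root q r.
Proof.
move=> nz_c nz_q res0; have [/hasP//|/hasPn nroot_q] := boolP (has (root q) rs).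
pose tf : {rmorphism A -> {fraction A}} := @tofrac A.
set p := c *: _ in res0.
have nz_lc (s : {poly A}) : s != 0 -> tf (lead_coef s) != 0.
  by move=> nz_s; rewrite tofrac_eq0 lead_coef_eq0.
have nz_p : p != 0.
  by rewrite /p scale_poly_eq0 negb_or nz_c monic_neq0 ?monic_prod_XsubC.
have : ~~ coprimep (map_poly tf p) (map_poly tf q).
  have := @rmorph_resultant _ _ tf _ _ (nz_lc _ nz_p) (nz_lc _ nz_q).
  rewrite res0 rmorph0 coprimep_def => /esym/eqP; rewrite resultant_eq0.
  by case: (size _) => [|[]].
rewrite /p map_polyZ rmorph_prod /= coprimepZl ?tofrac_eq0 //.
rewrite (eq_bigr (fun r => 'X - (tf r)%:P)) => [|r _]; last exact: map_polyXsubC.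
rewrite -(big_map tf xpredT (fun w => 'X - w%:P)) coprimep_prod_XsubC //.
move=> _ /mapP[r rs_r ->]; apply: contra (nroot_q r rs_r) => /rootP qr0.
by apply/rootP/eqP; rewrite -tofrac_eq0 -/(tf _) -horner_map qr0.
Qed.

Fixpoint mconst_rmorph (A : idomainType) (n : nat) : {rmorphism A -> mpoly A n} :=
  match n return {rmorphism A -> mpoly A n} with
  | 0 => idfun
  | n'.+1 => (polyC \o mconst_rmorph A n' : {rmorphism A -> {poly mpoly A n'}})
  end.

Fixpoint mmap_rmorph (A A' : idomainType) (f : {rmorphism A -> A'}) (n : nat)
  : {rmorphism mpoly A n -> mpoly A' n} :=
  match n return {rmorphism mpoly A n -> mpoly A' n} with
  | 0 => f
  | n'.+1 => (map_poly (mmap_rmorph A A' f n')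
               : {rmorphism {poly mpoly A n'} -> {poly mpoly A' n'}})
  end.

Arguments mmap_rmorph {A A'} f n.

Definition mvar_comb {A : idomainType} {n} (g : 'I_n -> {poly A}) : {poly mpoly A n} :=
  \sum_(i < n) (@mvar A n i)%:P * map_poly (mconst_rmorph A n) (g i).

Lemma widen_ord_lift_max n (j : 'I_n) : widen_ord (leqnSn n) j = lift ord_max j.
Proof. by apply: val_inj; rewrite /= /bump leqNgt ltn_ord. Qed.

Section NestedPolynomials.

Variables (A A' : idomainType) (f : {rmorphism A -> A'}).

Lemma mconstE n : @mconst A n =1 mconst_rmorph A n.
Proof. by elim: n => //= n IHn a; rewrite IHn. Qed.

Lemma mmapE n : @mmap A A' f n =1 mmap_rmorph f n.
Proof. by elim: n => //= n IHn p; apply: eq_map_poly. Qed.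

Lemma mconst_inj n : injective (mconst_rmorph A n).
Proof. by elim: n => //= n IHn a b /polyC_inj/IHn. Qed.

Lemma mmap_mconst n a : mmap_rmorph f n (mconst_rmorph A n a) = mconst_rmorph A' n (f a).
Proof. by elim: n => //= n IHn; rewrite map_polyC /= IHn. Qed.

Lemma map_poly_mmap_mconst n (p : {poly A}) :
  map_poly (mmap_rmorph f n) (map_poly (mconst_rmorph A n) p)
  = map_poly (mconst_rmorph A' n) (map_poly f p).
Proof. by rewrite -!map_poly_comp; apply: eq_map_poly => a /=; rewrite mmap_mconst. Qed.

Lemma mmap_mvar n i : mmap_rmorph f n (@mvar A n i) = @mvar A' n i.
Proof.
elim: n i => [[]//|n IHn] i /=.
by case: (unlift ord_max i) => [j|]; rewrite ?map_polyC /= ?IHn ?map_polyX.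
Qed.

Lemma mmap_eq0 n (r : mpoly A n) :
  {in mcoefs r, forall a, f a = 0} -> mmap_rmorph f n r = 0.
Proof.
elim: n r => [|n IHn] r /= f_r0; first exact: f_r0 (mem_head _ _).
apply/polyP => i; rewrite coef_map coef0 /=.
have [lt_i_r|le_r_i] := ltnP i (size r); last by rewrite nth_default ?rmorph0.
apply: IHn => a a_ri; apply: f_r0; apply/flattenP.
by exists (mcoefs r`_i) => //; apply: map_f; apply: mem_nth.
Qed.

Lemma mvar_max n : @mvar A n.+1 ord_max = 'X.
Proof. by rewrite /= unlift_none. Qed.

Lemma mvar_widen n (j : 'I_n) : @mvar A n.+1 (widen_ord (leqnSn n) j) = (@mvar A n j)%:P.
Proof. by rewrite widen_ord_lift_max /= liftK. Qed.

Lemma mvar_lin_indep n (a : 'I_n -> A) :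
  \sum_(i < n) @mvar A n i * mconst_rmorph A n (a i) = 0 -> forall i, a i = 0.
Proof.
elim: n a => [|n IHn] a; first by move=> _ [].
rewrite big_ord_recr mvar_max; under eq_bigr => j _ do rewrite mvar_widen -polyCM.
rewrite -rmorph_sum => /polyP sum0.
have := sum0 1%N; have := sum0 0%N.
rewrite !(coefD, coefC, coefXM, coef0) /= addr0 add0r => /IHn a_widen0.
rewrite -(rmorph0 (mconst_rmorph A n)) => /mconst_inj a_max0 i.
by have [j ->|->] := unliftP ord_max i; rewrite -?widen_ord_lift_max.
Qed.

Lemma mvar_combE n (g : 'I_n -> {poly A}) :
  \sum_(i < n) (@mvar A n i)%:P * map_poly (@mconst A n) (g i) = mvar_comb g.
Proof. by apply: eq_bigr => i _; rewrite (eq_map_poly (@mconstE n)). Qed.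

Lemma map_mvar_comb n (g : 'I_n -> {poly A}) :
  map_poly (mmap_rmorph f n) (mvar_comb g) = mvar_comb (fun i => map_poly f (g i)).
Proof.
rewrite rmorph_sum; apply: eq_bigr => i _.
by rewrite rmorphM /= map_polyC /= mmap_mvar map_poly_mmap_mconst.
Qed.

Lemma root_mvar_comb n (g : 'I_n -> {poly A}) z :
  root (mvar_comb g) (mconst_rmorph A n z) -> forall i, root (g i) z.
Proof.
move=> /rootP; rewrite horner_sum => comb0 i; apply/rootP; move: i.
apply: mvar_lin_indep; rewrite -[RHS]comb0; apply: eq_bigr => i _.
by rewrite hornerM hornerC horner_map.
Qed.

End NestedPolynomials.

Lemma specialized_resultant_common_root {B : idomainType} {K : closedFieldType}
    {ev : {rmorphism B -> K}} {m} {p : {poly B}} {g : 'I_m -> {poly B}} :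
    mmap_rmorph ev m (resultant (map_poly (mconst_rmorph B m) p) (mvar_comb g)) = 0 ->
    ev (lead_coef p) != 0 -> mmap_rmorph ev m (lead_coef (mvar_comb g)) != 0 ->
  exists z, root (map_poly ev p) z /\ forall i, root (map_poly ev (g i)) z.
Proof.
move=> res0 nz_lcp nz_lcg.
have nz_lcpm : mmap_rmorph ev m (lead_coef (map_poly (mconst_rmorph B m) p)) != 0.
  by rewrite (lead_coef_map_inj (mconst_inj B m) (rmorph0 _)) mmap_mconst fmorph_eq0.
rewrite rmorph_resultant // map_poly_mmap_mconst map_mvar_comb in res0.
have [rs pE] := closed_field_poly_normal (map_poly ev p).
move: res0; rewrite pE map_polyZ rmorph_prod /=.
under eq_bigr do rewrite map_polyXsubC.
rewrite -(big_map (mconst_rmorph K m) xpredT (fun w => 'X - w%:P)).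
have nz_lcpK : lead_coef (map_poly ev p) != 0 by rewrite lead_coef_map_eq.
case/resultant_split_eq0 => [||_ /mapP[z rs_z ->] /root_mvar_comb gz0].
- by rewrite fmorph_eq0.
- by rewrite -map_mvar_comb -lead_coef_eq0 lead_coef_map_eq.
by exists z; rewrite rootZ // root_prod_XsubC.
Qed.

Definition eval12_rmorph {K : fieldType} (b c : K) : {rmorphism Kt12 K -> K} :=
  horner_eval b \o map_poly (horner_eval c).

Lemma on_curveE {K : fieldType} (p : {poly Kt12 K}) a b c :
  on_curve p a b c <-> root (map_poly (eval12_rmorph b c) p) a.
Proof.
by rewrite /on_curve /eval012 (@eq_map_poly _ _ _ (eval12_rmorph b c)); split=> /eqP.
Qed.

Theorem mainTheorem12 (K : closedFieldType) (hK : [pchar K] =i pred0) (m : nat)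
  (F0 : {poly Kt12 K}) (F : 'I_m -> {poly Kt12 K})
  (hhom0 : exists d : nat, homogeneous d F0)
  (hhom : exists d : nat, forall i, homogeneous d (F i))
  (hdeg : forall i, (0 < (size (F i)).-1)%N)
  (hgcd : forall D : {poly Kt12 K}, (forall i, divides D (F i)) -> D \is a GRing.unit)
  (t1o t2o : K) (hto : (t1o, t2o) != (0, 0)) :
  let Fc : {poly mpoly (Kt12 K) m} :=
    \sum_(i < m) (@mvar (Kt12 K) m i)%:P * map_poly (@mconst (Kt12 K) m) (F i) in
  let R : mpoly (Kt12 K) m := resultant (map_poly (@mconst (Kt12 K) m) F0) Fc in
  (exists g : Kt12 K, is_gcd g (mcoefs R) /\ eval12 g t1o t2o = 0) ->
  @mconst K m (eval12 (lead_coef F0) t1o t2o)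
    * @mmap (Kt12 K) K (fun b : Kt12 K => eval12 b t1o t2o) m (lead_coef Fc) != 0 ->
  exists t0o : K, on_curve F0 t0o t1o t2o /\ forall i, on_curve (F i) t0o t1o t2o.
Proof.
rewrite /= mvar_combE (eq_map_poly (mconstE _ m)) => -[g [[g_dvd_R _] g0]].
rewrite mconstE (mmapE _ _ (eval12_rmorph t1o t2o)) mulf_eq0 negb_or.
case/andP=> nz_lcF0 nz_lcFc; set ev := eval12_rmorph t1o t2o in nz_lcFc *.
have R0 : mmap_rmorph ev m (resultant (map_poly (mconst_rmorph _ m) F0) (mvar_comb F)) = 0.
  by apply: mmap_eq0 => a /g_dvd_R [r ->]; rewrite rmorphM [ev g]g0 mulr0.
have nz_lcF0t : ev (lead_coef F0) != 0 by move: nz_lcF0; rewrite fmorph_eq0.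
have [z [F0z Fz]] := specialized_resultant_common_root R0 nz_lcF0t nz_lcFc.
by exists z; split=> [|i]; apply/on_curveE.
Qed.
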